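(* Let $\mathcal{G}_n(\mathcal{X},\mathcal{Y},d,Q)$ be a position-optimization game (as defined in the context) and let $\bm{x}$ be a pure strategy profile in which some player $i$ has $x_i\in\mathcal{X}^*$. Then $u_i(x_i,\bm{x}_{-i})\ge\frac{P(x_i)}{k_{\bm{x}}(x_i)}$, with equality if $\bm{x}$ covers $\mathcal{X}^*$. Moreover, for any $x'\in\mathcal{X}^*$ with $x'\neq x_i$, $u_i(x',\bm{x}_{-i})\ge\frac{P(x')}{k_{\bm{x}}(x')+1}$, with equality if $\bm{x}$ covers $\mathcal{X}^*$ and $k_{\bm{x}}(x_i)\ge 2$.
   Context: Position-optimization game: $\mathcal{X}$ is an arbitrary set of positions, $\mathcal{Y}$ an arbitrary set of targets, $d:\mathcal{X}\times\mathcal{Y}\to[0,\infty]$ a proximity function. For $y\in\mathcal{Y}$ let $x^*(y)=\arg\min_{x\in\mathcal{X}} d(x,y)$, and $\mathcal{X}^*=\bigcup_{y\in\mathcal{Y}}x^*(y)$ (pseudo-targets). $Q$ is a probability distribution on $\mathcal{Y}$ with $Q(\{y:|x^*(y)|>1\})=0$ and $|\mathcal{X}^*|<\infty$. For $x\in\mathcal{X}^*$ let $P(x)=Q(\{y: x^*(y)=\{x\}\})$. In the game $\mathcal{G}_n(\mathcal{X},\mathcal{Y},d,Q)$, players $i\in[n]$ choose positions $x_i\in\mathcal{X}$, $\bm{x}=(x_1,\dots,x_n)$; with $X_{\min}(\bm{x},y)=\arg\min_{x_i\in\bm{x}} d(x_i,y)$, player $i$'s utility is $u_i(x_i,\bm{x}_{-i})=\mathbb{E}_{y\sim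 Q}\big[\mathbb{1}[x_i\in X_{\min}(\bm{x},y)]/|X_{\min}(\bm{x},y)|\big]$; $u_i(x',\bm{x}_{-i})$ denotes the utility when player $i$ plays $x'$ instead and the others are unchanged. $k_{\bm{x}}(x)$ is the number of players at position $x$ in $\bm{x}$. A profile $\bm{x}$ covers $\mathcal{X}^*$ if $k_{\bm{x}}(x)\ge1$ for all $x\in\mathcal{X}^*$. *)

From HB Require Import structures.
From mathcomp Require Import all_boot all_order all_algebra.
From mathcomp Require Import all_classical all_reals all_analysis measurable_realfun.
Set Implicit Arguments. Unset Strict Implicit. Unset Printing Implicit Defensive.
Import Order.TTheory GRing.Theory Num.Theory.
Local Open Scope classical_set_scope.
Local Open Scope ring_scope.
Local Open Scope ereal_scope.

Section PosGame.
Context {R : realType} {X : Type} {dY : measure_display} {Y : measurableType dY}.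
Variable dist : X -> Y -> \bar R.

Definition xstar (y : Y) : set X := [set x | forall x', dist x y <= dist x' y].

Definition Xstar : set X := [set x | exists y, xstar y x].

Definition Pmass (Q : probability Y R) (x : X) : \bar R :=
  Q [set y | xstar y = [set x]].

Definition winners (n : nat) (prof : 'I_n -> X) (y : Y) : {set 'I_n} :=
  [set j | [forall l, dist (prof j) y <= dist (prof l) y]].

Definition share (n : nat) (prof : 'I_n -> X) (i : 'I_n) (y : Y) : R :=
  if i \in winners prof y then ((#|winners prof y|%:R)^-1)%R else 0%R.

Definition utility (Q : probability Y R) (n : nat) (prof : 'I_n -> X) (i : 'I_n)
  : \bar R := \int[Q]_(y in setT) (share prof i y)%:E.

End PosGame.

Definition deviate {X : Type} (n : nat) (prof : 'I_n -> X) (i : 'I_n) (x' : X)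
  : 'I_n -> X := fun j => if j == i then x' else prof j.

Definition kcount {X : Type} (n : nat) (prof : 'I_n -> X) (x : X) : nat :=
  #|[set j | `[< prof j = x >]]|.

Definition covers {X : Type} (n : nat) (prof : 'I_n -> X) (S : set X) : Prop :=
  forall x, S x -> (1 <= kcount prof x)%N.

From HB Require Import structures.
From mathcomp Require Import all_boot all_order all_algebra.
From mathcomp Require Import all_classical all_reals all_analysis measurable_realfun.
Set Implicit Arguments. Unset Strict Implicit. Unset Printing Implicit Defensive.
Import Order.TTheory GRing.Theory Num.Theory.
Local Open Scope classical_set_scope.
Local Open Scope ring_scope.
Local Open Scope ereal_scope.

(* Off a Q-null set every target y has a unique nearest pseudo-target x*(y),
   and as soon as some player stands at x*(y), the players nearest to y are
   exactly those standing there.  Hence player i's share of y is 1/k(x_i) when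
   x*(y) = x_i and nonnegative otherwise, which gives the lower bound; if the
   profile covers X*, the share vanishes whenever x*(y) <> x_i, which gives
   equality.  The claims about x' are the same ones for the profile in which i
   moves to x': there x' has k(x') + 1 occupants, and that profile still covers
   X* when another player stays at x_i. *)

Lemma set1_of_subsingleton (T : Type) (S : set T) : S <> set0 ->
  ~ (exists x1 x2, S x1 /\ S x2 /\ x1 <> x2) -> exists x, S = [set x].
Proof.
move/eqP/set0P => [x Sx] uniqS; exists x; apply/seteqP; split=> [x' Sx' | _ ->] //=.
by apply: contrapT => x'x; apply: uniqS; exists x', x.
Qed.

Lemma measurable_fun_fin_fibres d (Y : measurableType d) d' (Z : measurableType d')
    (T : finType) (g : Y -> T) (f : T -> Z) :
  (forall t, measurable [set y | g y = t]) -> measurable_fun setT (f \o g).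
Proof.
move=> mg _ B _; rewrite setTI.
have -> : (f \o g) @^-1` B = \bigcup_(t in f @^-1` B) [set y | g y = t].
  by apply/seteqP; split=> [y Bfy | y [t Bft /= ->]] //; exists (g y).
by apply: fin_bigcup_measurable => //; exact: finite_finset.
Qed.

Lemma integral_scaled_indic d (Y : measurableType d) (R : realType)
    (mu : {measure set Y -> \bar R}) (A : set Y) (c : R) :
  measurable A -> (0 <= c)%R ->
  \int[mu]_(y in setT) (c * \1_A y)%:E = mu A * c%:E.
Proof.
move=> mA c0; rewrite (integralZl_indic _ (fun=> A)) //; last by rewrite ltNge c0.
by rewrite integral_indic // setIT muleC.
Qed.

Lemma measurable_scaled_indic d (Y : measurableType d) (R : realType)
    (A : set Y) (c : R) :
  measurable A -> measurable_fun setT (fun y => (c * \1_A y)%:E).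
Proof.
by move=> mA; apply/measurable_EFinP/measurable_funM => //; exact: measurable_indic.
Qed.

Section Kcount.
Variables (X : Type) (n : nat).
Implicit Types (p : 'I_n -> X).

Lemma kcountE p x : kcount p x = #|[set j | `[< p j = x >]]%SET|.
Proof. by apply: eq_card => j; rewrite inE; apply/idP/idP => [/set_mem | /mem_set]. Qed.

Lemma kcount_gt0P p x : (0 < kcount p x)%N <-> exists j, p j = x.
Proof.
rewrite kcountE; split=> [/card_gt0P[j] | [j pjx]].
  by rewrite inE => /asboolP; exists j.
by apply/card_gt0P; exists j; rewrite inE; exact/asboolP.
Qed.

Lemma kcount_deviate p i x' :
  p i <> x' -> kcount (deviate p i x') x' = (kcount p x').+1.
Proof.
move=> pix'; rewrite !kcountE.
have -> : [set j | `[< deviate p i x' j = x' >]]%SET =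
          i |: [set j | `[< p j = x' >]]%SET.
  by apply/setP => j; rewrite !inE /deviate; case: eqP => //= _; rewrite asboolT.
by rewrite cardsU1 inE asboolF.
Qed.

Lemma covers_deviate p i x' (S : set X) : p i <> x' -> covers p S ->
  (2 <= kcount p (p i))%N -> covers (deviate p i x') S.
Proof.
move=> pix' covS k2 x Sx; apply/kcount_gt0P.
have [->|xx'] := pselect (x = x'); first by exists i; rewrite /deviate eqxx.
suff [j ji pjx] : exists2 j, j != i & p j = x.
  by exists j; rewrite /deviate (negbTE ji).
have [->|xpi] := pselect (x = p i).
  move: k2; rewrite kcountE (cardsD1 i) inE asboolT // add1n ltnS.
  by case/card_gt0P => j; rewrite !inE => /andP[ji /asboolP]; exists j.
have [j pjx] := (kcount_gt0P p x).1 (covS x Sx).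
by exists j => //; apply: contra_notN xpi => /eqP ji; rewrite -pjx ji.
Qed.

End Kcount.

Section PositionGame.
Variables (R : realType) (X : Type) (dY : measure_display) (Y : measurableType dY).
Variable dist : X -> Y -> \bar R.
Variables (n : nat) (p : 'I_n -> X).

Lemma share_ge0 i y : (0 <= share dist p i y)%R.
Proof. by rewrite /share; case: ifP. Qed.

Lemma winners_xstar1 y x j0 : xstar dist y = [set x] -> p j0 = x ->
  winners dist p y = [set j | `[< p j = x >]]%SET.
Proof.
move=> yx pj0; have xmin : xstar dist y x by rewrite yx.
apply/setP => j; rewrite !inE; apply/forallP/asboolP => [jw | -> l]; last exact: xmin.
have : xstar dist y (p j).
  by move=> x'; rewrite (le_trans (jw j0)) // pj0; exact: xmin.
by rewrite yx.
Qed.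

Lemma share_xstar1_self i y : xstar dist y = [set p i] ->
  share dist p i y = ((kcount p (p i))%:R^-1)%R.
Proof.
by move=> yx; rewrite /share (winners_xstar1 yx (erefl _)) kcountE inE asboolT.
Qed.

Lemma share_xstar1_other i y x j0 : xstar dist y = [set x] -> p j0 = x ->
  p i <> x -> share dist p i y = 0%R.
Proof. by move=> yx pj0 pix; rewrite /share (winners_xstar1 yx pj0) inE asboolF. Qed.

Hypothesis dist_meas : forall x, measurable_fun setT (dist x).

Lemma measurable_winner j : measurable [set y | j \in winners dist p y].
Proof.
have -> : [set y | j \in winners dist p y] =
          \bigcap_(l in setT) [set y | dist (p j) y <= dist (p l) y].
  apply/seteqP; split=> y /=; rewrite inE => jw.
    by move=> l _; exact: (forallP jw).
  by apply/forallP => l; exact: jw.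
apply: fin_bigcap_measurable => [|l _]; first exact: finite_finset.
by rewrite -[X in measurable X]setTI; apply: measurable_lee.
Qed.

Lemma measurable_winners_eq (S : {set 'I_n}) :
  measurable [set y | winners dist p y = S].
Proof.
have -> : [set y | winners dist p y = S] =
          \bigcap_(j in setT) [set y | (j \in winners dist p y) = (j \in S)].
  apply/seteqP; split=> y /= wS; first by move=> j _ /=; rewrite wS.
  by apply/setP => j; exact: wS.
apply: fin_bigcap_measurable => [|j _]; first exact: finite_finset.
case: (j \in S); first exact: measurable_winner.
rewrite (_ : [set y | _ = false] = ~` [set y | j \in winners dist p y]).
  exact/measurableC/measurable_winner.
by apply/seteqP; split=> y /= => [-> | /negP/negbTE].
Qed.

Lemma measurable_share i : measurable_fun setT (fun y => (share dist p i y)%:E).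
Proof.
exact: (measurable_fun_fin_fibres
  (fun W : {set 'I_n} => (if i \in W then (#|W|%:R)^-1 else 0)%R%:E)
  measurable_winners_eq).
Qed.

Variable Q : probability Y R.

Lemma utility_ge i : measurable [set y | xstar dist y = [set p i]] ->
  Pmass dist Q (p i) * ((kcount p (p i))%:R^-1)%:E <= utility dist Q p i.
Proof.
move=> mA; have k0 : (0 <= (kcount p (p i))%:R^-1 :> R)%R by rewrite invr_ge0.
rewrite /Pmass -integral_scaled_indic //; apply: ge0_le_integral => //.
- exact: measurable_scaled_indic.
- exact: measurable_share.
move=> y _; rewrite lee_fin indicE; case: (boolP (y \in _)) => [/set_mem yA | _].
  by rewrite mulr1 share_xstar1_self.
by rewrite mulr0 share_ge0.
Qed.

Lemma utility_eq_of_covers i : measurable [set y | xstar dist y = [set p i]] ->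
  Q.-negligible
    [set y | exists x1 x2, xstar dist y x1 /\ xstar dist y x2 /\ x1 <> x2] ->
  Q.-negligible [set y | xstar dist y = set0] ->
  covers p (Xstar dist) ->
  utility dist Q p i = Pmass dist Q (p i) * ((kcount p (p i))%:R^-1)%:E.
Proof.
move=> mA Q_multi Q_empty covP.
have k0 : (0 <= (kcount p (p i))%:R^-1 :> R)%R by rewrite invr_ge0.
rewrite /Pmass -integral_scaled_indic //; apply: ae_eq_integral => //.
- exact: measurable_share.
- exact: measurable_scaled_indic.
apply: negligibleS (negligibleU Q_multi Q_empty) => y /= share_neq.
apply: contrapT => /not_orP[y_single y_nonempty]; apply: share_neq => _.
have [x0 yx0] := set1_of_subsingleton y_nonempty y_single.
congr EFin; rewrite indicE.
have [x0i|x0pi] := pselect (x0 = p i).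
  by rewrite x0i in yx0; rewrite mem_set // mulr1 share_xstar1_self.
have [j0 pj0] : exists j0, p j0 = x0.
  by apply/kcount_gt0P/covP; exists y; rewrite yx0.
rewrite (share_xstar1_other yx0 pj0); last by move=> /esym.
rewrite memNset ?mulr0 // => /= yA; apply: x0pi.
by change ([set p i] x0); rewrite -yA yx0.
Qed.

End PositionGame.

Theorem lemma1 (R : realType) (X : Type) (dY : measure_display)
  (Y : measurableType dY) (dist : X -> Y -> \bar R) (Q : probability Y R)
  (n : nat) (prof : 'I_n -> X) (i : 'I_n)
  (hd0 : forall x y, 0 <= dist x y)
  (hdm : forall x, measurable_fun setT (dist x))
  (hPm : forall x, measurable [set y | xstar dist y = [set x]])
  (huniq : Q.-negligible
     [set y | exists x1 x2, xstar dist y x1 /\ xstar dist y x2 /\ x1 <> x2])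
  (hne : Q.-negligible [set y | xstar dist y = set0])
  (hfin : finite_set (Xstar dist))
  (hi : Xstar dist (prof i)) :
  (Pmass dist Q (prof i) * ((kcount prof (prof i))%:R^-1)%:E
       <= utility dist Q prof i
   /\ (covers prof (Xstar dist) ->
       utility dist Q prof i
         = Pmass dist Q (prof i) * ((kcount prof (prof i))%:R^-1)%:E))
  /\
  (forall x', Xstar dist x' -> x' <> prof i ->
     Pmass dist Q x' * (((kcount prof x').+1)%:R^-1)%:E
       <= utility dist Q (deviate prof i x') i
     /\ (covers prof (Xstar dist) -> (2 <= kcount prof (prof i))%N ->
         utility dist Q (deviate prof i x') i
           = Pmass dist Q x' * (((kcount prof x').+1)%:R^-1)%:E)).
Proof.
split; first by split=> [|covP]; [exact: utility_ge | exact: utility_eq_of_covers].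
move=> x' _ x'pi; have pix' : prof i <> x' by move=> /esym.
have dev_i : deviate prof i x' i = x' by rewrite /deviate eqxx.
have := utility_ge hdm Q (hPm (deviate prof i x' i)).
have := utility_eq_of_covers hdm (hPm (deviate prof i x' i)) huniq hne.
rewrite dev_i (kcount_deviate pix') => util_eq util_ge.
by split=> // covP k2; apply/util_eq/covers_deviate.
Qed.
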